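(* For all $M,N\in\Lambda^{001}$, if $M\longrightarrow_\beta^* N$ then $\mathcal T(M)\mathrel{\widetilde{\longrightarrow}_r^*}\mathcal T(N)$.
   Context: Fix a set $\mathcal V$ of variables. A 001-infinitary λ-term is a possibly infinite tree built from variables $x\in\mathcal V$, abstractions $\lambda x.M$ and applications $(M)N$ ($N$ the argument), such that every infinite branch enters infinitely often the argument position of an application node; $\Lambda^{001}$ denotes the set of such terms, up to α-equivalence, with fresh variables always available. $M[N/x]$ is capture-avoiding substitution (defined corecursively). One-step β-reduction $\longrightarrow_\beta$ is the contextual closure (under abstractions and on both sides of applications, each step with a finite derivation) of $(\lambda x.M)N\longrightarrow_\beta M[N/x]$; $\longrightarrow_\beta^*$ is its reflexive-transitive closure. Resource terms: $s::=x\mid\lambda x.s\mid\langle s\rangle\bar t$, $\bar t=[t_1,\dots,t_n]$ a finite multiset of resource terms. Finite sums are finite sets of resource terms written additively ($0$ empty), constructors extended by linearity. Resource substitution $s\langle\bar t/x\rangle$ is the sum over $\sigma\in\mathfrak S_n$ of the terms obtained by substituting $t_{\sigma(i)}$ for the $i$-th free occurrence of $x$ in $s$, if $x$ has exactly $n$ free occurrences in $s$, and $0$ otherwise. Simple resource reduction $\longmapsto_r$ is the least relation from terms (resp. monomials) to finite sums containing $\langle\lambda x.s\rangle\bar t\longmapsto_r s\langle\bar t/x\rangle$ and closed under abstraction, the function and argument positions of application, and elements of monomials ($s\longmapsto_r S\Rightarrow s\cdot\bar t\longmapsto_r S\cdot\bar t$). On finite sums, $\sum_{i=0}^n s_i\longrightarrow_r\sum_{i=0}^n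 T_i$ whenever $s_0\longmapsto_r T_0$ and for $1\le i\le n$ either $s_i\longmapsto_r T_i$ or $T_i=s_i$; $\longrightarrow_r^*$ is the reflexive-transitive closure. For possibly infinite sets $\mathcal S,\mathcal S'$ of resource terms, $\mathcal S\mathrel{\widetilde{\longrightarrow}_r^*}\mathcal S'$ means: there exist an index set $I$, resource terms $s_i$ and finite sums $S'_i$ ($i\in I$) with $\mathcal S=\{s_i : i\in I\}$, $\mathcal S'=\bigcup_{i\in I}S'_i$ and $s_i\longrightarrow_r^* S'_i$ for all $i$. Taylor approximation $\ltimes$ is defined inductively by $x\ltimes x$; $s\ltimes M\Rightarrow\lambda x.s\ltimes\lambda x.M$; ($s\ltimes M$ and $t_i\ltimes N$ for all $i$) $\Rightarrow\langle s\rangle[t_1,\dots,t_n]\ltimes(M)N$; $\mathcal T(M)=\{s : s\ltimes M\}$. *)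

From Stdlib Require Import List Permutation Relations Arith.
Import ListNotations.

CoInductive term : Type :=
| var : nat -> term
| lam : term -> term
| app : term -> term -> term.   (* app M N = (M)N, N in argument position *)

CoInductive bisim : term -> term -> Prop :=
| bisim_var n : bisim (var n) (var n)
| bisim_lam M M' : bisim M M' -> bisim (lam M) (lam M')
| bisim_app M M' N N' : bisim M M' -> bisim N N' -> bisim (app M N) (app M' N').

(* 001 condition: every infinite branch enters the argument position of an
   application infinitely often, i.e. nu X. mu Y. var | lam Y | app Y X *)
Inductive ev001 (P : term -> Prop) : term -> Prop :=
| ev001_var n : ev001 P (var n)
| ev001_lam M : ev001 P M -> ev001 P (lam M)
| ev001_app M N : ev001 P M -> P N -> ev001 P (app M N).

CoInductive is001 : term -> Prop :=
| is001_intro M : ev001 is001 M -> is001 M.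

Definition uprn (r : nat -> nat) (n : nat) : nat :=
  match n with 0 => 0 | S m => S (r m) end.

CoFixpoint tren (r : nat -> nat) (M : term) : term :=
  match M with
  | var n => var (r n)
  | lam M => lam (tren (uprn r) M)
  | app M N => app (tren r M) (tren r N)
  end.

Definition up (s : nat -> term) (n : nat) : term :=
  match n with 0 => var 0 | S m => tren S (s m) end.

CoFixpoint tsubst (s : nat -> term) (M : term) : term :=
  match M with
  | var n => s n
  | lam M => lam (tsubst (up s) M)
  | app M N => app (tsubst s M) (tsubst s N)
  end.

Definition subst0 (N : term) (n : nat) : term :=
  match n with 0 => N | S m => var m end.

Inductive beta_step : term -> term -> Prop :=
| beta_root M N : beta_step (app (lam M) N) (tsubst (subst0 N) M)
| beta_lam M M' : beta_step M M' -> beta_step (lam M) (lam M')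
| beta_appl M M' N : beta_step M M' -> beta_step (app M N) (app M' N)
| beta_appr M N N' : beta_step N N' -> beta_step (app M N) (app M N').

(* reduction on Lambda^001, trees considered up to extensional equality *)
Definition beta_rel (M N : term) : Prop :=
  is001 M /\ is001 N /\ (bisim M N \/ beta_step M N).

Definition beta_star : term -> term -> Prop := clos_refl_trans term beta_rel.

Inductive rterm : Type :=
| rvar : nat -> rterm
| rlam : rterm -> rterm
| rapp : rterm -> list rterm -> rterm.  (* bags = lists up to permutation *)

Inductive requiv : rterm -> rterm -> Prop :=
| rq_var n : requiv (rvar n) (rvar n)
| rq_lam s s' : requiv s s' -> requiv (rlam s) (rlam s')
| rq_app s s' b b1 b' :
    requiv s s' -> Permutation b b1 -> Forall2 requiv b1 b' ->
    requiv (rapp s b) (rapp s' b').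

Fixpoint rren (r : nat -> nat) (s : rterm) : rterm :=
  match s with
  | rvar n => rvar (r n)
  | rlam s => rlam (rren (uprn r) s)
  | rapp s b => rapp (rren r s) (map (rren r) b)
  end.

Fixpoint occ (k : nat) (s : rterm) : nat :=
  match s with
  | rvar n => if Nat.eqb n k then 1 else 0
  | rlam s => occ (S k) s
  | rapp s b =>
      occ k s + (fix occb (b : list rterm) : nat :=
                   match b with nil => 0 | t :: b => occ k t + occb b end) b
  end.

(* replace successive free occurrences of index k (the binder being
   removed) by the successive elements of l; other indices above k are
   decremented. *)
Fixpoint fill (k : nat) (s : rterm) (l : list rterm) : rterm * list rterm :=
  match s with
  | rvar n =>
      if Nat.eqb n k then
        match l with
        | t :: l' => (rren (fun i => i + k) t, l')
        | nil => (rvar n, nil)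
        end
      else (rvar (if Nat.ltb n k then n else pred n), l)
  | rlam s => let (s', l') := fill (S k) s l in (rlam s', l')
  | rapp s b =>
      let (s', l1) := fill k s l in
      let (b', l2) :=
        (fix fillb (b : list rterm) (l : list rterm) : list rterm * list rterm :=
           match b with
           | nil => (nil, l)
           | t :: b => let (t', l1) := fill k t l in
                       let (b', l2) := fillb b l1 in (t' :: b', l2)
           end) b l1 in
      (rapp s' b', l2)
  end.

Section Perms.
Context {A : Type}.
Fixpoint inserts (x : A) (l : list A) : list (list A) :=
  match l with
  | nil => [[x]]
  | y :: l' => (x :: y :: l') :: map (cons y) (inserts x l')
  end.
Fixpoint perms (l : list A) : list (list A) :=
  match l with
  | nil => [nil]
  | x :: l' => flat_map (inserts x) (perms l')
  end.
End Perms.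

(* finite sums: lists read as finite sets of resource terms (mod requiv) *)
Definition rsum := list rterm.

Definition rsubst (s : rterm) (b : list rterm) : rsum :=
  if Nat.eqb (occ 0 s) (length b)
  then map (fun l => fst (fill 0 s l)) (perms b)
  else nil.

Definition sum_mem (u : rterm) (S : rsum) : Prop :=
  exists v, In v S /\ requiv u v.

Definition sum_eq (S T : rsum) : Prop :=
  forall u, sum_mem u S <-> sum_mem u T.

Inductive rstep : rterm -> rsum -> Prop :=
| rs_beta s b : rstep (rapp (rlam s) b) (rsubst s b)
| rs_lam s S : rstep s S -> rstep (rlam s) (map rlam S)
| rs_appl s b S : rstep s S -> rstep (rapp s b) (map (fun s' => rapp s' b) S)
| rs_appr s b B : mstep b B -> rstep (rapp s b) (map (rapp s) B)
with mstep : list rterm -> list (list rterm) -> Prop :=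
| ms_elt l1 t l2 S :
    rstep t S -> mstep (l1 ++ t :: l2) (map (fun t' => l1 ++ t' :: l2) S).

Definition rstepq (s : rterm) (S : rsum) : Prop :=
  exists s' S', requiv s s' /\ rstep s' S' /\ sum_eq S S'.

(* reduction on finite sums: sum_{i=0}^n s_i -> sum_i T_i (s_i distinct) *)
Definition sstep (S T : rsum) : Prop :=
  exists ps : list (rterm * rsum),
    sum_eq S (map fst ps) /\
    sum_eq T (flat_map snd ps) /\
    ForallOrdPairs (fun p q => ~ requiv (fst p) (fst q)) ps /\
    Forall (fun p => rstepq (fst p) (snd p) \/ snd p = [fst p]) ps /\
    Exists (fun p => rstepq (fst p) (snd p)) ps.

Definition rstar : rsum -> rsum -> Prop :=
  clos_refl_trans rsum (fun S T => sum_eq S T \/ sstep S T).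

Definition rstar_inf (A B : rterm -> Prop) : Prop :=
  exists (I : Type) (s : I -> rterm) (S' : I -> rsum),
    (forall u, A u <-> exists i, requiv u (s i)) /\
    (forall u, B u <-> exists i, sum_mem u (S' i)) /\
    (forall i, rstar [s i] (S' i)).

Inductive taylor : rterm -> term -> Prop :=
| ty_var n : taylor (rvar n) (var n)
| ty_lam s M : taylor s M -> taylor (rlam s) (lam M)
| ty_app s b M N :
    taylor s M -> Forall (fun t => taylor t N) b -> taylor (rapp s b) (app M N).

Definition Taylor (M : term) : rterm -> Prop := fun s => taylor s M.

(* The argument is a simulation of one β-step, closed under composition:
   - the Taylor expansion commutes with renaming and, through the operation
     [fill] underlying resource substitution, with substitution: for a root
     redex, T(M[N/x]) consists exactly of the resource substitutions of
     approximants of M by bags of approximants of N;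
   - a β-step in context is simulated by a reduction *tree* of single
     resource steps ([Reach], [ReachAt]); trees are pushed through the linear
     contexts λ, function position and bag elements, and trees compose;
   - finally trees are flattened into reductions of finite sums (which are
     sets of terms, hence require deduplication) by a terminating strategy,
     and the pairs (approximant, reduct) index the reduction T(M) ~> T(N). *)
From Pilot Require Import Defs.
From Stdlib Require Import List Permutation Relations Arith Lia Classical.
Import ListNotations.

(* Nested induction on resource terms: the bag of an application is a list,
   so the induction hypothesis for it is a [Forall]. *)
Fixpoint rterm_nested_ind (P : rterm -> Prop) (Hvar : forall n, P (rvar n))
  (Hlam : forall s, P s -> P (rlam s))
  (Happ : forall s b, P s -> Forall P b -> P (rapp s b)) (s : rterm) : P s :=
  match s with
  | rvar n => Hvar n
  | rlam s => Hlam s (rterm_nested_ind P Hvar Hlam Happ s)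
  | rapp s b => Happ s b (rterm_nested_ind P Hvar Hlam Happ s)
      ((fix bag_ind (b : list rterm) : Forall P b :=
          match b with
          | nil => Forall_nil _
          | t :: b => Forall_cons _ (rterm_nested_ind P Hvar Hlam Happ t) (bag_ind b)
          end) b)
  end.

Lemma Forall2_Permutation_commute {A B} (R : A -> B -> Prop) xs ys zs :
  Forall2 R xs ys -> Permutation ys zs ->
  exists ws, Permutation xs ws /\ Forall2 R ws zs.
Proof.
  intros HR HP. revert xs HR. induction HP as [|y ys zs _ IH|y1 y2 ys|ys zs us _ IH1 _ IH2];
    intros xs HR.
  - inversion HR. exists []. split; constructor.
  - inversion HR as [|x ? xs' ? Rxy Rxs]; subst.
    destruct (IH _ Rxs) as [ws [Pws Rws]].
    exists (x :: ws). split; constructor; auto.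
  - inversion HR as [|x1 ? xs1 ? R1 HR1]; subst.
    inversion HR1 as [|x2 ? xs2 ? R2 HR2]; subst.
    exists (x2 :: x1 :: xs2). split; [apply perm_swap|repeat constructor; auto].
  - destruct (IH1 _ HR) as [ws [P1 R1]]. destruct (IH2 _ R1) as [ws' [P2 R2]].
    exists ws'. split; [eapply perm_trans|]; eauto.
Qed.

Lemma requiv_refl s : requiv s s.
Proof.
  induction s as [n|s IH|s b IHs IHb] using rterm_nested_ind.
  - constructor.
  - constructor; auto.
  - apply rq_app with b; auto using Permutation_refl.
    induction IHb; constructor; auto.
Qed.

Lemma Forall2_requiv_refl (b : list rterm) : Forall2 requiv b b.
Proof. induction b; constructor; auto using requiv_refl. Qed.

Lemma requiv_sym s s' : requiv s s' -> requiv s' s.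
Proof.
  revert s'. induction s as [n|s IH|s b IHs IHb] using rterm_nested_ind;
    intros s' HR; inversion HR as [|? ? Hs|? s1 ? b1 b' Hs Pb Fb]; subst.
  - constructor.
  - constructor; auto.
  - assert (IHb1 : Forall (fun t => forall t', requiv t t' -> requiv t' t) b1)
      by (eapply Permutation_Forall; eauto).
    assert (Fb' : Forall2 requiv b' b1).
    { clear - IHb1 Fb. induction Fb; inversion IHb1; constructor; auto. }
    destruct (Forall2_Permutation_commute _ _ _ _ Fb' (Permutation_sym Pb)) as [w [Pw Fw]].
    econstructor; eauto.
Qed.

Lemma requiv_trans s s' s'' : requiv s s' -> requiv s' s'' -> requiv s s''.
Proof.
  revert s' s''. induction s as [n|s IH|s b IHs IHb] using rterm_nested_ind;
    intros s' s'' H1 H2; inversion H1 as [|? ? H1s|? ? ? b1 b' H1s P1 F1]; subst;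
    inversion H2 as [|? ? H2s|? ? ? b2 b'' H2s P2 F2]; subst.
  - constructor.
  - constructor; eauto.
  - destruct (Forall2_Permutation_commute _ _ _ _ F1 P2) as [w [Pw Fw]].
    assert (IHw : Forall (fun t => forall t' t'', requiv t t' -> requiv t' t'' -> requiv t t'') w)
      by (apply (Permutation_Forall (perm_trans P1 Pw)); exact IHb).
    econstructor; [eauto|eapply perm_trans; eauto|].
    clear - IHw Fw F2. revert b'' F2.
    induction Fw; intros b'' F2; inversion F2; inversion IHw; subst; constructor; eauto.
Qed.

Lemma taylor_requiv s s' M : requiv s s' -> taylor s M -> taylor s' M.
Proof.
  revert s' M. induction s as [n|s IH|s b IHs IHb] using rterm_nested_ind;
    intros s' M' HR HT; inversion HT as [|? ? HTs|? ? M N HTs HTb]; subst;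
    inversion HR as [|? ? HRs|? ? ? b1 b' HRs Pb Fb]; subst; constructor; eauto.
  assert (IHb1 : Forall (fun t => taylor t N /\
            forall t' M, requiv t t' -> taylor t M -> taylor t' M) b1).
  { apply (Permutation_Forall Pb).
    clear - IHb HTb. induction IHb; inversion HTb; constructor; auto. }
  clear - IHb1 Fb. induction Fb as [|t t' ? ? Rt]; inversion IHb1 as [|? ? [Tt IHt]];
    constructor; eauto.
Qed.

Lemma bisim_sym M M' : bisim M M' -> bisim M' M.
Proof.
  revert M M'. cofix CIH. intros M M' HB.
  destruct HB; constructor; apply CIH; assumption.
Qed.

Lemma taylor_bisim s M M' : bisim M M' -> taylor s M -> taylor s M'.
Proof.
  revert M M'. induction s as [n|s IH|s b IHs IHb] using rterm_nested_ind;
    intros M M' HB HT; inversion HT as [|? ? HTs|? ? M1 N1 HTs HTb]; subst;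
    inversion HB as [|? ? HBs|? ? ? N' HBl HBr]; subst; constructor; eauto.
  clear - IHb HTb HBr. induction IHb; inversion HTb; constructor; eauto.
Qed.

(* Unfolding equations for the corecursive renaming and substitution,
   obtained through the usual one-step expansion of a coinductive value. *)
Definition term_frob (M : term) : term :=
  match M with var n => var n | lam M => lam M | Defs.app M N => Defs.app M N end.

Lemma term_frob_eq M : M = term_frob M.
Proof. destruct M; reflexivity. Qed.

Lemma tren_var r n : tren r (var n) = var (r n).
Proof. rewrite (term_frob_eq (tren r (var n))). reflexivity. Qed.
Lemma tren_lam r M : tren r (lam M) = lam (tren (uprn r) M).
Proof. rewrite (term_frob_eq (tren r (lam M))). reflexivity. Qed.
Lemma tren_app r M N : tren r (Defs.app M N) = Defs.app (tren r M) (tren r N).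
Proof. rewrite (term_frob_eq (tren r (Defs.app M N))). reflexivity. Qed.
Lemma tsubst_var sg n : tsubst sg (var n) = sg n.
Proof. rewrite (term_frob_eq (tsubst sg (var n))). simpl. destruct (sg n); reflexivity. Qed.
Lemma tsubst_lam sg M : tsubst sg (lam M) = lam (tsubst (up sg) M).
Proof. rewrite (term_frob_eq (tsubst sg (lam M))). reflexivity. Qed.
Lemma tsubst_app sg M N : tsubst sg (Defs.app M N) = Defs.app (tsubst sg M) (tsubst sg N).
Proof. rewrite (term_frob_eq (tsubst sg (Defs.app M N))). reflexivity. Qed.

Lemma rren_ext s r r' : (forall i, r i = r' i) -> rren r s = rren r' s.
Proof.
  revert r r'. induction s as [n|s IH|s b IHs IHb] using rterm_nested_ind;
    intros r r' E; simpl; f_equal; auto.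
  - apply IH. intros [|i]; simpl; auto.
  - apply map_ext_Forall. revert IHb. apply Forall_impl. auto.
Qed.

Lemma rren_comp s r r' : rren r (rren r' s) = rren (fun i => r (r' i)) s.
Proof.
  revert r r'. induction s as [n|s IH|s b IHs IHb] using rterm_nested_ind;
    intros r r'; simpl; f_equal; auto.
  - rewrite IH. apply rren_ext. intros [|i]; reflexivity.
  - rewrite map_map. apply map_ext_Forall. revert IHb. apply Forall_impl. auto.
Qed.

Lemma rren_id s : rren (fun i => i) s = s.
Proof.
  induction s as [n|s IH|s b IHs IHb] using rterm_nested_ind; simpl; f_equal; auto.
  - rewrite <- IH at 2. apply rren_ext. intros [|i]; reflexivity.
  - rewrite <- (map_id b) at 2. apply map_ext_Forall. exact IHb.
Qed.

Lemma taylor_var u n : taylor u (var n) <-> u = rvar n.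
Proof. split; intro H; [inversion H; reflexivity|subst; constructor]. Qed.

Lemma taylor_tren t N r : taylor t N -> taylor (rren r t) (tren r N).
Proof.
  revert N r. induction t as [n|t IH|t b IHt IHb] using rterm_nested_ind;
    intros N' r HT; inversion HT as [|? ? HTt|? ? M N HTt HTb]; subst; simpl.
  - rewrite tren_var. constructor.
  - rewrite tren_lam. constructor. auto.
  - rewrite tren_app. constructor; auto.
    clear - IHb HTb. induction IHb; inversion HTb; constructor; auto.
Qed.

Lemma taylor_tren_inv u N r : taylor u (tren r N) -> exists t, taylor t N /\ u = rren r t.
Proof.
  revert N r. induction u as [n|u IH|u b IHu IHb] using rterm_nested_ind;
    intros [m|M|M N] r HT; rewrite ?tren_var, ?tren_lam, ?tren_app in HT;
    inversion HT as [|? ? HTu|? ? ? ? HTu HTb]; subst.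
  - exists (rvar m). split; constructor.
  - destruct (IH _ _ HTu) as [t [Tt ->]]. exists (rlam t). split; constructor; auto.
  - destruct (IHu _ _ HTu) as [t [Tt ->]].
    assert (exists b0, Forall (fun t => taylor t N) b0 /\ b = map (rren r) b0)
      as [b0 [Tb0 ->]].
    { clear - IHb HTb. induction IHb as [|v b IHv IHb' IH]; inversion HTb as [|? ? Tv Tb]; subst.
      - exists []; auto.
      - destruct IH as [b0 [Tb0 ->]]; auto. destruct (IHv _ _ Tv) as [t0 [Tt0 ->]].
        exists (t0 :: b0). split; constructor; auto. }
    exists (rapp t b0). split; constructor; auto.
Qed.

Lemma taylor_tren_iff u N r : taylor u (tren r N) <-> exists t, taylor t N /\ u = rren r t.
Proof.
  split; [apply taylor_tren_inv|]. intros [t [Tt ->]]. apply taylor_tren; auto.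
Qed.

(* Resource substitution, as implemented in [Defs] by [fill], traverses the
   term left to right; on bags it is the following iteration. *)
Fixpoint occb k (b : list rterm) : nat :=
  match b with nil => 0 | t :: b => occ k t + occb k b end.

Fixpoint fillb k (b : list rterm) (l : list rterm) : list rterm * list rterm :=
  match b with
  | nil => (nil, l)
  | t :: b => let (t', l1) := fill k t l in let (b', l2) := fillb k b l1 in (t' :: b', l2)
  end.

Lemma occ_rapp k s b : occ k (rapp s b) = occ k s + occb k b.
Proof. simpl. f_equal. induction b; simpl; auto. Qed.

Lemma fill_rapp k s b l : fill k (rapp s b) l =
  let (s', l1) := fill k s l in let (b', l2) := fillb k b l1 in (rapp s' b', l2).
Proof.
  simpl. destruct (fill k s l) as [s' l1].
  match goal with |- (let (_,_) := ?F b l1 in _) = _ =>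
    assert (E : forall b l, F b l = fillb k b l) end.
  { induction b0 as [|t b0 IH]; intros; simpl; auto.
    destruct (fill k t l0). rewrite IH. reflexivity. }
  rewrite E. reflexivity.
Qed.

(* [sg] substitutes [N] for the index [k] under [k] binders: this describes
   the Taylor expansion of every [sg n], and is the invariant of the
   simultaneous traversal of a term and of its substitution instance. *)
Definition subst_spec (N : term) (k : nat) (sg : nat -> term) : Prop :=
  (forall n, n < k -> forall u, taylor u (sg n) <-> u = rvar n) /\
  (forall n, k < n -> forall u, taylor u (sg n) <-> u = rvar (n - 1)) /\
  (forall u, taylor u (sg k) <-> exists t, taylor t N /\ u = rren (fun i => i + k) t).

Lemma subst_spec_0 N : subst_spec N 0 (subst0 N).
Proof.
  split; [|split].
  - intros; lia.
  - intros [|n] Hn u; [lia|]. simpl. rewrite taylor_var. replace (n - 0) with n by lia. tauto.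
  - intros u; simpl. split.
    + intros T. exists u. split; auto.
      rewrite (rren_ext u _ (fun i => i)), rren_id; [reflexivity|]. intros; lia.
    + intros [t [T ->]]. rewrite (rren_ext t _ (fun i => i)), rren_id; [exact T|]. intros; lia.
Qed.

Lemma subst_spec_up N k sg : subst_spec N k sg -> subst_spec N (S k) (up sg).
Proof.
  intros [Hlt [Hgt Heq]]. split; [|split].
  - intros [|m] Hm u; simpl; [apply taylor_var|].
    rewrite taylor_tren_iff. split.
    + intros [t [T ->]]. apply (Hlt m) in T; [subst; reflexivity|lia].
    + intros ->. exists (rvar m). split; [apply (Hlt m); auto; lia|reflexivity].
  - intros [|m] Hm u; simpl; [lia|].
    rewrite taylor_tren_iff. split.
    + intros [t [T ->]]. apply (Hgt m) in T; [subst; simpl; f_equal; lia|lia].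
    + intros ->. exists (rvar (m - 1)). split; [apply (Hgt m); auto; lia|simpl; f_equal; lia].
  - intros u. simpl. rewrite taylor_tren_iff. split.
    + intros [t [T ->]]. apply Heq in T as [t0 [T0 ->]]. exists t0. split; auto.
      rewrite rren_comp. apply rren_ext. intros; lia.
    + intros [t0 [T0 ->]]. exists (rren (fun i => i + k) t0). split; [apply Heq; eauto|].
      rewrite rren_comp. apply rren_ext. intros; lia.
Qed.

Lemma Forall_split_length {A} (P : A -> Prop) (l : list A) n m :
  Forall P l -> length l = n + m ->
  exists l1 l2, l = l1 ++ l2 /\ length l1 = n /\ length l2 = m /\ Forall P l1 /\ Forall P l2.
Proof.
  intros F L. exists (firstn n l), (skipn n l).
  rewrite <- (firstn_skipn n l) in F. apply Forall_app in F as [F1 F2].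
  rewrite length_firstn, length_skipn, firstn_skipn. repeat split; auto; lia.
Qed.

Definition fill_sound_for (N : term) (s : rterm) : Prop :=
  forall k sg M l l', subst_spec N k sg -> taylor s M ->
    Forall (fun t => taylor t N) l -> length l = occ k s ->
    exists s', fill k s (l ++ l') = (s', l') /\ taylor s' (tsubst sg M).

Lemma fillb_sound N k sg P b l l' : subst_spec N k sg -> Forall (fill_sound_for N) b ->
  Forall (fun t => taylor t P) b -> Forall (fun t => taylor t N) l -> length l = occb k b ->
  exists b', fillb k b (l ++ l') = (b', l') /\ Forall (fun t => taylor t (tsubst sg P)) b'.
Proof.
  intros HS IHb. revert l. induction IHb as [|t b IHt IHb IH]; intros l Tb Tl Ll;
    inversion Tb as [|? ? Tt Tb']; subst.
  - destruct l; [exists []; auto|discriminate].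
  - destruct (Forall_split_length _ l (occ k t) (occb k b) Tl Ll)
      as [l1 [l2 [-> [L1 [L2 [T1 T2]]]]]].
    rewrite <- app_assoc. simpl.
    destruct (IHt k sg P l1 (l2 ++ l') HS Tt T1 L1) as [t' [-> Tt']].
    destruct (IH l2 Tb' T2 L2) as [b' [-> Tb'']].
    exists (t' :: b'). split; auto.
Qed.

Lemma fill_sound N s : fill_sound_for N s.
Proof.
  induction s as [n|s IH|s b IHs IHb] using rterm_nested_ind;
    intros k sg M l l' HS HT Tl Ll; inversion HT as [|? M' Ts|? ? M' P Ts Tb]; subst.
  - rewrite tsubst_var. destruct HS as [Hlt [Hgt Heq]]. simpl in Ll |- *.
    destruct (Nat.eqb_spec n k) as [->|Hne].
    + destruct l as [|t [|]]; try discriminate. inversion Tl; subst.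
      eexists; split; [reflexivity|]. apply Heq. eauto.
    + destruct l; [|discriminate]. eexists; split; [reflexivity|].
      destruct (Nat.ltb_spec n k).
      * apply Hlt; auto.
      * apply Hgt; [lia|]. f_equal; lia.
  - rewrite tsubst_lam. simpl in Ll |- *.
    destruct (IH (S k) (up sg) M' l l' (subst_spec_up _ _ _ HS) Ts Tl Ll) as [s' [-> Ts']].
    eexists; split; [reflexivity|]. constructor; auto.
  - rewrite tsubst_app, fill_rapp. rewrite occ_rapp in Ll.
    destruct (Forall_split_length _ l (occ k s) (occb k b) Tl Ll)
      as [l1 [l2 [-> [L1 [L2 [T1 T2]]]]]].
    rewrite <- app_assoc. destruct (IHs k sg M' l1 (l2 ++ l') HS Ts T1 L1) as [s' [-> Ts']].
    destruct (fillb_sound N k sg P b l2 l' HS IHb Tb T2 L2) as [b' [-> Tb']].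
    eexists; split; [reflexivity|]. constructor; auto.
Qed.

Definition fill_complete_for (N : term) (t : rterm) : Prop :=
  forall M k sg, subst_spec N k sg -> taylor t (tsubst sg M) ->
    exists s l, taylor s M /\ Forall (fun t => taylor t N) l /\ length l = occ k s /\
      forall l', fill k s (l ++ l') = (t, l').

Lemma fill_complete_var N t m k sg : subst_spec N k sg -> taylor t (sg m) ->
  exists s l, taylor s (var m) /\ Forall (fun t => taylor t N) l /\ length l = occ k s /\
    forall l', fill k s (l ++ l') = (t, l').
Proof.
  intros [Hlt [Hgt Heq]] T. exists (rvar m).
  destruct (lt_eq_lt_dec m k) as [[Hm|Hm]|Hm]; [| subst m |].
  - apply Hlt in T as ->; auto. exists []. simpl.
    destruct (Nat.eqb_spec m k); [lia|]. destruct (Nat.ltb_spec m k); [|lia].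
    repeat split; constructor.
  - apply Heq in T as [t0 [T0 ->]]. exists [t0]. simpl. rewrite Nat.eqb_refl.
    repeat split; repeat constructor; auto.
  - apply Hgt in T as ->; auto. exists []. simpl.
    destruct (Nat.eqb_spec m k); [lia|]. destruct (Nat.ltb_spec m k); [lia|].
    repeat split; try constructor. intros l'. do 2 f_equal. lia.
Qed.

Lemma fillb_complete N k sg P b : subst_spec N k sg -> Forall (fill_complete_for N) b ->
  Forall (fun t => taylor t (tsubst sg P)) b ->
  exists sb lb, Forall (fun t => taylor t P) sb /\ Forall (fun t => taylor t N) lb /\
    length lb = occb k sb /\ forall l', fillb k sb (lb ++ l') = (b, l').
Proof.
  intros HS IHb. induction IHb as [|t b IHt IHb IH]; intros Tb;
    inversion Tb as [|? ? Tt Tb']; subst.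
  - exists [], []. repeat split; auto.
  - destruct (IHt P k sg HS Tt) as [s [l [Ts [Tl [Ll Ef]]]]].
    destruct (IH Tb') as [sb [lb [Tsb [Tlb [Llb Efb]]]]].
    exists (s :: sb), (l ++ lb). repeat split.
    + constructor; auto.
    + apply Forall_app; auto.
    + rewrite length_app. simpl. lia.
    + intros l'. simpl. rewrite <- app_assoc, Ef, Efb. reflexivity.
Qed.

Lemma fill_complete N t : fill_complete_for N t.
Proof.
  induction t as [n|t IH|t b IHt IHb] using rterm_nested_ind;
    intros [m|M|M P] k sg HS HT;
    try (rewrite tsubst_var in HT; exact (fill_complete_var N _ m k sg HS HT));
    rewrite ?tsubst_lam, ?tsubst_app in HT; inversion HT as [|? ? Tt|? ? ? ? Tt Tb]; subst.
  - destruct (IH M (S k) (up sg) (subst_spec_up _ _ _ HS) Tt) as [s [l [Ts [Tl [Ll Ef]]]]].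
    exists (rlam s), l. repeat split; auto. constructor; auto.
    intros l'; simpl. rewrite Ef. reflexivity.
  - destruct (IHt M k sg HS Tt) as [s [l [Ts [Tl [Ll Ef]]]]].
    destruct (fillb_complete N k sg P b HS IHb Tb) as [sb [lb [Tsb [Tlb [Llb Efb]]]]].
    exists (rapp s sb), (l ++ lb). repeat split.
    + constructor; auto.
    + apply Forall_app; auto.
    + rewrite occ_rapp, length_app. lia.
    + intros l'. rewrite fill_rapp, <- app_assoc, Ef, Efb. reflexivity.
Qed.

Lemma inserts_Permutation {A} (a : A) l x : In x (inserts a l) -> Permutation x (a :: l).
Proof.
  revert x; induction l as [|y l IH]; intros x Hx; simpl in Hx.
  - destruct Hx as [<-|[]]. apply Permutation_refl.
  - destruct Hx as [<-|Hx]; [apply Permutation_refl|].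
    apply in_map_iff in Hx as [x' [<- Hx']].
    eapply perm_trans; [apply perm_skip, IH, Hx'|apply perm_swap].
Qed.

Lemma perms_Permutation {A} (l x : list A) : In x (perms l) -> Permutation x l.
Proof.
  revert x; induction l as [|a l IH]; intros x Hx; simpl in Hx.
  - destruct Hx as [<-|[]]. apply Permutation_refl.
  - apply in_flat_map in Hx as [y [Hy Hx]].
    eapply perm_trans; [apply inserts_Permutation, Hx|apply perm_skip, IH, Hy].
Qed.

Lemma perms_self {A} (l : list A) : In l (perms l).
Proof.
  induction l as [|a l IH]; simpl; auto.
  apply in_flat_map. exists l. split; auto. destruct l; simpl; auto.
Qed.

Lemma rsubst_sound s b M N : taylor s M -> Forall (fun t => taylor t N) b ->
  forall y, In y (rsubst s b) -> taylor y (tsubst (subst0 N) M).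
Proof.
  intros Ts Tb y Hy. unfold rsubst in Hy.
  destruct (Nat.eqb_spec (occ 0 s) (length b)) as [Lb|]; [|destruct Hy].
  apply in_map_iff in Hy as [l [<- Hl]]. apply perms_Permutation in Hl.
  destruct (fill_sound N s 0 (subst0 N) M l [] (subst_spec_0 N) Ts) as [s' [E Ts']].
  - exact (Permutation_Forall (Permutation_sym Hl) Tb).
  - rewrite (Permutation_length Hl). auto.
  - rewrite app_nil_r in E. rewrite E. exact Ts'.
Qed.

Lemma rsubst_complete t M N : taylor t (tsubst (subst0 N) M) ->
  exists s b, taylor s M /\ Forall (fun t => taylor t N) b /\ In t (rsubst s b).
Proof.
  intros Tt. destruct (fill_complete N t M 0 (subst0 N) (subst_spec_0 N) Tt)
    as [s [b [Ts [Tb [Lb Ef]]]]].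
  exists s, b. repeat split; auto. unfold rsubst. rewrite Lb, Nat.eqb_refl.
  apply in_map_iff. exists b. split; [|apply perms_self].
  specialize (Ef []). rewrite app_nil_r in Ef. rewrite Ef. reflexivity.
Qed.

(* Trees are easy to build compositionally;
   they are turned into reductions of finite sums further below. *)
Definition requiv_closed (g : rterm -> Prop) : Prop :=
  forall a b, requiv a b -> g a -> g b.

Inductive Reach (g : rterm -> Prop) : rterm -> Prop :=
| Reach_leaf u : g u -> Reach g u
| Reach_node u T : rstepq u T -> (forall y, In y T -> Reach g y) -> Reach g u.

Inductive ReachAt (g : rterm -> Prop) (t : rterm) : rterm -> Prop :=
| ReachAt_leaf u : g u -> requiv u t -> ReachAt g t u
| ReachAt_node u T x : rstepq u T -> (forall y, In y T -> Reach g y) ->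
    In x T -> ReachAt g t x -> ReachAt g t u.

Lemma ReachAt_Reach g t u : ReachAt g t u -> Reach g u.
Proof. induction 1; [apply Reach_leaf|eapply Reach_node]; eauto. Qed.

Lemma rstepq_of_rstep u T : rstep u T -> rstepq u T.
Proof. intros H. exists u, T. repeat split; auto using requiv_refl. Qed.

Lemma rstepq_requiv u u' T : requiv u u' -> rstepq u' T -> rstepq u T.
Proof.
  intros R [v [T' [Rv [S E]]]]. exists v, T'. split; [eapply requiv_trans|]; eauto.
Qed.

Definition linear_ctx (f : rterm -> rterm) : Prop :=
  (forall a a', requiv a a' -> requiv (f a) (f a')) /\
  (forall u T, rstep u T -> rstep (f u) (map f T)).

Lemma sum_eq_map f T T' : (forall a a', requiv a a' -> requiv (f a) (f a')) ->
  sum_eq T T' -> sum_eq (map f T) (map f T').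
Proof.
  intros Hf H u. split; intros [v [Hv R]]; apply in_map_iff in Hv as [x [<- Hx]].
  - destruct (proj1 (H x)) as [y [Hy Ry]]; [exists x; auto using requiv_refl|].
    exists (f y). split; [apply in_map|eapply requiv_trans]; eauto.
  - destruct (proj2 (H x)) as [y [Hy Ry]]; [exists x; auto using requiv_refl|].
    exists (f y). split; [apply in_map|eapply requiv_trans]; eauto.
Qed.

Lemma rstepq_ctx f u T : linear_ctx f -> rstepq u T -> rstepq (f u) (map f T).
Proof.
  intros [Hq Hs] [u' [T' [R [S E]]]]. exists (f u'), (map f T').
  split; [auto|split; [auto|apply sum_eq_map; auto]].
Qed.

Lemma Reach_ctx g1 g2 f u : linear_ctx f -> (forall x, g1 x -> Reach g2 (f x)) ->
  Reach g1 u -> Reach g2 (f u).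
Proof.
  intros Hf Hg R. induction R as [u Gu|u T HT _ IH]; auto.
  apply Reach_node with (map f T); [apply rstepq_ctx; auto|].
  intros y Hy. apply in_map_iff in Hy as [x [<- Hx]]. auto.
Qed.

Lemma ReachAt_ctx g1 g2 f t t' u : linear_ctx f ->
  (forall x, g1 x -> Reach g2 (f x)) ->
  (forall x, g1 x -> requiv x t -> ReachAt g2 t' (f x)) ->
  ReachAt g1 t u -> ReachAt g2 t' (f u).
Proof.
  intros Hf Hg Hm R. induction R as [u Gu Ru|u T x HT HTr Hx _ IH]; auto.
  apply ReachAt_node with (map f T) (f x); auto using in_map.
  - apply rstepq_ctx; auto.
  - intros y Hy. apply in_map_iff in Hy as [z [<- Hz]]. apply Reach_ctx with g1; auto.
Qed.

Lemma linear_ctx_id : linear_ctx (fun x => x).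
Proof. split; auto. intros. rewrite map_id. auto. Qed.

Lemma linear_ctx_lam : linear_ctx rlam.
Proof. split; intros; constructor; auto. Qed.

Lemma linear_ctx_appl b : linear_ctx (fun s => rapp s b).
Proof.
  split; intros.
  - apply rq_app with b; auto using Permutation_refl, Forall2_requiv_refl.
  - apply rs_appl; auto.
Qed.

Lemma linear_ctx_bag s l1 l2 : linear_ctx (fun x => rapp s (l1 ++ x :: l2)).
Proof.
  split; intros.
  - apply rq_app with (l1 ++ a :: l2); auto using Permutation_refl, requiv_refl.
    apply Forall2_app; auto using Forall2_requiv_refl.
  - rewrite <- map_map with (f := fun x => l1 ++ x :: l2) (g := rapp s).
    apply rs_appr, ms_elt. auto.
Qed.

Lemma Reach_trans g1 g2 u : (forall x, g1 x -> Reach g2 x) -> Reach g1 u -> Reach g2 u.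
Proof. intros. apply (Reach_ctx g1 g2 (fun x => x)); auto using linear_ctx_id. Qed.

Lemma ReachAt_requiv g t x m : requiv_closed g -> requiv x m -> ReachAt g t m -> ReachAt g t x.
Proof.
  intros Hg R H. inversion H as [? Gm Rm|? T y HT HTr Hy Ry]; subst.
  - apply ReachAt_leaf; [eapply Hg; eauto using requiv_sym|eapply requiv_trans; eauto].
  - eapply ReachAt_node; eauto. eapply rstepq_requiv; eauto.
Qed.

Lemma ReachAt_trans g1 g2 t m u : requiv_closed g2 -> (forall x, g1 x -> Reach g2 x) ->
  ReachAt g1 m u -> ReachAt g2 t m -> ReachAt g2 t u.
Proof.
  intros Hc Hg R1 R2. apply (ReachAt_ctx g1 g2 (fun x => x) m t u); auto using linear_ctx_id.
  intros; eapply ReachAt_requiv; eauto.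
Qed.

(* A sum is a list read as a set
   modulo [requiv]; one step of [sstep] reduces one chosen element [x] and
   keeps one representative of every other element.  [dedup] computes these
   representatives, and [sumw] is the total weight used for termination. *)
Definition sumw {A} (w : A -> nat) (l : list A) : nat :=
  fold_right (fun a acc => w a + acc) 0 l.

Lemma sumw_app {A} (w : A -> nat) l1 l2 : sumw w (l1 ++ l2) = sumw w l1 + sumw w l2.
Proof. induction l1; simpl; auto. rewrite IHl1; lia. Qed.

Lemma dedup {A} (key : A -> rterm) (w : A -> nat) (x : rterm) (l : list A) :
  exists l', (forall a, In a l' -> In a l) /\
    (forall a, In a l -> ~ requiv (key a) x -> exists a', In a' l' /\ requiv (key a) (key a')) /\
    (forall a, In a l' -> ~ requiv (key a) x) /\
    ForallOrdPairs (fun a b => ~ requiv (key a) (key b)) l' /\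
    sumw w l' <= sumw w l /\
    (forall a, In a l -> requiv (key a) x -> sumw w l' + w a <= sumw w l).
Proof.
  induction l as [|y l IH].
  - exists []. simpl. repeat split; try constructor; intros a [].
  - destruct IH as [l' [Hsub [Hrep [Hx [Hdist [Hw Hwx]]]]]].
    destruct (classic (requiv (key y) x \/ exists a', In a' l' /\ requiv (key y) (key a')))
      as [Hy|Hy].
    + exists l'. simpl. split; [|split; [|split; [|split; [|split]]]]; auto; try lia.
      * intros a [<-|Ha] Na; auto. destruct Hy as [Hy|Hy]; [tauto|exact Hy].
      * intros a [<-|Ha] Ea; [|specialize (Hwx a Ha Ea)]; lia.
    + apply not_or_and in Hy as [Ny Nl]. exists (y :: l'). simpl.
      split; [|split; [|split; [|split; [|split]]]]; try lia.
      * intros a [<-|Ha]; auto.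
      * intros a [<-|Ha] Na; [exists y; auto using requiv_refl|].
        destruct (Hrep a Ha Na) as [a' [Ha' R]]. eauto.
      * intros a [<-|Ha]; auto.
      * constructor; auto. apply Forall_forall. intros b Hb R. eauto.
      * intros a [<-|Ha] Ea; [tauto|]. specialize (Hwx a Ha Ea); lia.
Qed.

Lemma ForallOrdPairs_map {A B} (R : B -> B -> Prop) (f : A -> B) l :
  ForallOrdPairs (fun a b => R (f a) (f b)) l -> ForallOrdPairs R (map f l).
Proof. induction 1; simpl; constructor; auto. rewrite Forall_map. auto. Qed.

Lemma sum_eq_refl S : sum_eq S S.
Proof. intro; tauto. Qed.

Lemma sstep_make (C : list rterm) x T D : In x C -> rstepq x T ->
  (forall d, In d D -> In d C) ->
  (forall c, In c C -> ~ requiv c x -> exists d, In d D /\ requiv c d) ->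
  (forall d, In d D -> ~ requiv d x) ->
  ForallOrdPairs (fun a b => ~ requiv a b) D -> sstep C (T ++ D).
Proof.
  intros Hx HT Hsub Hrep HDx HDist.
  set (keep := map (fun d => (d, [d]) : rterm * rsum) D).
  assert (Esnd : flat_map snd keep = D).
  { clear. induction D; simpl; f_equal; auto. }
  assert (Efst : map fst keep = D).
  { unfold keep. rewrite map_map. apply map_id. }
  exists ((x, T) :: keep). simpl. rewrite Efst, Esnd.
  split; [|split; [apply sum_eq_refl|split; [|split]]].
  - intros u; split.
    + intros [v [Hv R]]. destruct (classic (requiv v x)) as [E|N].
      * exists x. split; [left; auto|eapply requiv_trans; eauto].
      * destruct (Hrep v Hv N) as [d [Hd Rd]]. exists d.
        split; [right; auto|eapply requiv_trans; eauto].
    + intros [v [Hv R]]. exists v. split; auto. destruct Hv as [<-|Hv]; auto.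
  - constructor.
    + unfold keep. rewrite Forall_map. apply Forall_forall.
      intros d Hd R. apply (HDx d Hd), requiv_sym, R.
    + unfold keep. apply ForallOrdPairs_map. exact HDist.
  - constructor; [left; auto|]. unfold keep. rewrite Forall_map.
    apply Forall_forall. intros; right; auto.
  - constructor. simpl. auto.
Qed.

Lemma sstep_focus {A} (key : A -> rterm) (w : A -> nat) (C T : list A) (a : A) :
  In a C -> rstepq (key a) (map key T) ->
  exists D, sstep (map key C) (map key (T ++ D)) /\ (forall d, In d D -> In d C) /\
    (forall c, In c C -> ~ requiv (key c) (key a) -> exists d, In d D /\ requiv (key c) (key d)) /\
    sumw w D + w a <= sumw w C.
Proof.
  intros Ha HT. destruct (dedup key w (key a) C) as [D [Hsub [Hrep [HDx [HDist [_ Hw]]]]]].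
  exists D. split; [|split; [exact Hsub|split; [exact Hrep|apply Hw; auto using requiv_refl]]].
  rewrite map_app. apply sstep_make with (x := key a); auto using in_map.
  - intros d Hd. apply in_map_iff in Hd as [c [<- Hc]]. auto using in_map.
  - intros c Hc Nc. apply in_map_iff in Hc as [c' [<- Hc']].
    destruct (Hrep c' Hc' Nc) as [d [Hd R]]. eauto using in_map.
  - intros d Hd. apply in_map_iff in Hd as [d' [<- Hd']]. auto.
  - apply ForallOrdPairs_map. exact HDist.
Qed.

(* Trees with an explicit weight bound, to measure termination of the
   strategy that reduces a whole sum. *)
Inductive ReachSized (g : rterm -> Prop) : rterm -> nat -> Prop :=
| ReachSized_leaf u n : g u -> ReachSized g u n
| ReachSized_node u (ts : list (rterm * nat)) n : rstepq u (map fst ts) ->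
    (forall p, In p ts -> ReachSized g (fst p) (snd p)) -> sumw snd ts < n ->
    ReachSized g u n.

Lemma ReachSized_list g (T : list rterm) : (forall y, In y T -> exists n, ReachSized g y n) ->
  exists ts, map fst ts = T /\ forall p, In p ts -> ReachSized g (fst p) (snd p).
Proof.
  induction T as [|y T IH]; intros H.
  - exists []. split; [reflexivity|intros p []].
  - destruct (H y (or_introl eq_refl)) as [n Hn].
    destruct IH as [ts [E Hts]]; [intros; apply H; right; auto|].
    exists ((y, n) :: ts). split; [simpl; f_equal; auto|].
    intros p [<-|Hp]; auto.
Qed.

Lemma Reach_sized g u : Reach g u -> exists n, ReachSized g u n.
Proof.
  induction 1 as [u Gu|u T HT _ IH].
  - exists 0. apply ReachSized_leaf; auto.
  - destruct (ReachSized_list g T IH) as [ts [<- Hts]].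
    exists (S (sumw snd ts)). eapply ReachSized_node; eauto.
Qed.

(* Reducing a whole sum: while some element is not yet in [g], reduce it
   along its tree.  Elements already in [g] are never lost. *)
Lemma sum_reduce g : requiv_closed g -> forall n (C : list (rterm * nat)),
  (forall p, In p C -> ReachSized g (fst p) (snd p)) -> sumw snd C <= n ->
  exists C', rstar (map fst C) C' /\ (forall y, In y C' -> g y) /\
    (forall t, g t -> sum_mem t (map fst C) -> sum_mem t C').
Proof.
  intros Hg n. induction n as [n IH] using (well_founded_induction lt_wf).
  intros C HC Hn.
  destruct (classic (exists p, In p C /\ ~ g (fst p))) as [[[u m] [Hp Nu]]|Hall].
  - simpl in Nu. pose proof (HC _ Hp) as Hu. simpl in Hu.
    inversion Hu as [? ? Gu|? ts ? HT Hts Hlt]; [tauto|]; subst.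
    destruct (sstep_focus fst snd C ts (u, m) Hp HT) as [D [Hstep [Hsub [Hrep Hw]]]].
    destruct (IH (sumw snd (ts ++ D))) with (C := ts ++ D) as [C' [R [G Keep]]].
    + rewrite sumw_app. simpl in Hw. lia.
    + intros q Hq. apply in_app_or in Hq as [Hq|Hq]; auto.
    + lia.
    + exists C'. split; [eapply rt_trans; [apply rt_step; right; exact Hstep|exact R]|].
      split; auto. intros t Gt [v [Hv Rv]]. apply Keep; auto.
      apply in_map_iff in Hv as [q [<- Hq]].
      destruct (classic (requiv (fst q) u)) as [E|N].
      * exfalso. apply Nu, (Hg t u); [eapply requiv_trans; eauto|exact Gt].
      * destruct (Hrep q Hq N) as [d [Hd Rd]]. exists (fst d).
        rewrite map_app. split; [apply in_or_app; right; apply in_map; auto|].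
        eapply requiv_trans; eauto.
  - exists (map fst C). split; [apply rt_refl|split; auto].
    intros y Hy. apply in_map_iff in Hy as [q [<- Hq]].
    apply NNPP. intro N. apply Hall. eauto.
Qed.

Lemma reduce_to_g g s : requiv_closed g -> Reach g s ->
  exists C', rstar [s] C' /\ forall y, In y C' -> g y.
Proof.
  intros Hg R. destruct (Reach_sized g s R) as [n Hn].
  destruct (sum_reduce g Hg (n + 0) [(s, n)]) as [C' [R' [G _]]].
  - intros p [<-|[]]. exact Hn.
  - simpl. lia.
  - exists C'. auto.
Qed.

Lemma reduce_marked g t u : ReachAt g t u -> forall C, In u C ->
  (forall y, In y C -> Reach g y) ->
  exists C', rstar C C' /\ (forall y, In y C' -> Reach g y) /\ sum_mem t C'.
Proof.
  induction 1 as [u Gu Ru|u T x HT HTr Hx _ IH]; intros C Hu HC.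
  - exists C. split; [apply rt_refl|split; auto]. exists u. auto using requiv_sym.
  - destruct (sstep_focus (fun y => y) (fun _ => 0) C T u Hu) as [D [Hstep [Hsub _]]].
    { rewrite map_id. exact HT. }
    rewrite !map_id in Hstep.
    destruct (IH (T ++ D)) as [C' [R [G Ht]]].
    + apply in_or_app; auto.
    + intros y Hy. apply in_app_or in Hy as [Hy|Hy]; auto.
    + exists C'. split; auto. eapply rt_trans; [apply rt_step; right; exact Hstep|exact R].
Qed.

Lemma reduce_to_g_at g s t : requiv_closed g -> ReachAt g t s -> g t ->
  exists C', rstar [s] C' /\ (forall y, In y C' -> g y) /\ sum_mem t C'.
Proof.
  intros Hg R Gt. destruct (reduce_marked g t s R [s]) as [C1 [R1 [G1 M1]]].
  - left; auto.
  - intros y [<-|[]]. eapply ReachAt_Reach; eauto.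
  - destruct (ReachSized_list g C1) as [ts [E Hts]].
    { intros; apply Reach_sized; auto. }
    destruct (sum_reduce g Hg (sumw snd ts) ts Hts (le_n _)) as [C' [R' [G Keep]]].
    rewrite E in R', Keep. exists C'. split; [eapply rt_trans; eauto|split; auto].
Qed.

Definition simulates (M N : term) : Prop :=
  (forall s, taylor s M -> Reach (Taylor N) s) /\
  (forall t, taylor t N -> exists s, taylor s M /\ ReachAt (Taylor N) t s).

Lemma Taylor_requiv_closed N : requiv_closed (Taylor N).
Proof. intros a b R T. eapply taylor_requiv; eauto. Qed.

Lemma simulates_bisim M N : bisim M N -> simulates M N.
Proof.
  intros HB. split.
  - intros s Ts. apply Reach_leaf. eapply taylor_bisim; eauto.
  - intros t Tt. exists t. split; [eapply taylor_bisim; eauto using bisim_sym|].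
    apply ReachAt_leaf; auto using requiv_refl.
Qed.

Lemma simulates_refl M : simulates M M.
Proof.
  split; [intros; apply Reach_leaf; auto|].
  intros t Tt. exists t. split; auto. apply ReachAt_leaf; auto using requiv_refl.
Qed.

Lemma simulates_trans M P N : simulates M P -> simulates P N -> simulates M N.
Proof.
  intros [S1 C1] [S2 C2]. split.
  - intros s Ts. apply (Reach_trans (Taylor P)); auto.
  - intros t Tt. destruct (C2 t Tt) as [u [Tu Ru]]. destruct (C1 u Tu) as [s [Ts Rs]].
    exists s. split; auto.
    apply (ReachAt_trans (Taylor P) (Taylor N) t u s); auto using Taylor_requiv_closed.
Qed.

Lemma simulates_root M N : simulates (Defs.app (lam M) N) (tsubst (subst0 N) M).
Proof.
  split.
  - intros s HT. inversion HT as [| |sl b ? ? Tl Tb]; subst.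
    inversion Tl as [|s1 ? Ts1|]; subst.
    apply Reach_node with (rsubst s1 b); [apply rstepq_of_rstep; constructor|].
    intros y Hy. apply Reach_leaf. eapply rsubst_sound; eauto.
  - intros t Tt. destruct (rsubst_complete t M N Tt) as [s0 [b [Ts0 [Tb Hin]]]].
    exists (rapp (rlam s0) b). split; [repeat constructor; auto|].
    apply ReachAt_node with (rsubst s0 b) t; auto.
    + apply rstepq_of_rstep; constructor.
    + intros y Hy. apply Reach_leaf. eapply rsubst_sound; eauto.
    + apply ReachAt_leaf; auto using requiv_refl.
Qed.

Lemma simulates_lam M M' : simulates M M' -> simulates (lam M) (lam M').
Proof.
  intros [S C]. split.
  - intros s HT. inversion HT as [|s0 ? Ts0|]; subst.
    apply (Reach_ctx (Taylor M') _ rlam); auto using linear_ctx_lam.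
    intros x Tx. apply Reach_leaf. constructor; auto.
  - intros t HT. inversion HT as [|t0 ? Tt0|]; subst.
    destruct (C _ Tt0) as [s [Ts R]]. exists (rlam s). split; [constructor; auto|].
    apply (ReachAt_ctx (Taylor M') _ rlam t0); auto using linear_ctx_lam.
    + intros x Tx. apply Reach_leaf. constructor; auto.
    + intros x Tx Rx. apply ReachAt_leaf; constructor; auto.
Qed.

Lemma simulates_appl M M' N : simulates M M' -> simulates (Defs.app M N) (Defs.app M' N).
Proof.
  intros [S C]. split.
  - intros s HT. inversion HT as [| |s0 b ? ? Ts0 Tb]; subst.
    apply (Reach_ctx (Taylor M') _ (fun s => rapp s b)); auto using linear_ctx_appl.
    intros x Tx. apply Reach_leaf. constructor; auto.
  - intros t HT. inversion HT as [| |t0 b ? ? Tt0 Tb]; subst.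
    destruct (C _ Tt0) as [s [Ts R]]. exists (rapp s b). split; [constructor; auto|].
    apply (ReachAt_ctx (Taylor M') _ (fun s => rapp s b) t0); auto using linear_ctx_appl.
    + intros x Tx. apply Reach_leaf. constructor; auto.
    + intros x Tx Rx. apply ReachAt_leaf; [constructor; auto|].
      apply rq_app with b; auto using Permutation_refl, Forall2_requiv_refl.
Qed.

(* In argument position, the elements of a bag are reduced one at a time. *)
Lemma app_cons_snoc {A} (l1 l2 : list A) x : l1 ++ x :: l2 = (l1 ++ [x]) ++ l2.
Proof. rewrite <- app_assoc. reflexivity. Qed.

Lemma bag_Reach s M N' : taylor s M -> forall b l1, Forall (fun t => taylor t N') l1 ->
  Forall (Reach (Taylor N')) b -> Reach (Taylor (Defs.app M N')) (rapp s (l1 ++ b)).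
Proof.
  intros Ts b. induction b as [|y b IH]; intros l1 Tl1 Hb; inversion Hb as [|? ? Ry Rb]; subst.
  - apply Reach_leaf. rewrite app_nil_r. constructor; auto.
  - apply (Reach_ctx (Taylor N') _ (fun x => rapp s (l1 ++ x :: b)));
      [apply linear_ctx_bag| |exact Ry].
    intros x Tx. rewrite app_cons_snoc.
    apply IH; [apply Forall_app|]; auto.
Qed.

Lemma bag_ReachAt s M N N' : taylor s M -> forall ss ys,
  Forall2 (fun s y => taylor s N /\ ReachAt (Taylor N') y s) ss ys -> forall l1 l1',
  Forall2 requiv l1 l1' -> Forall (fun t => taylor t N') l1 ->
  ReachAt (Taylor (Defs.app M N')) (rapp s (l1' ++ ys)) (rapp s (l1 ++ ss)).
Proof.
  intros Ts ss ys H. induction H as [|s0 y ss ys [Ts0 R0] H IH]; intros l1 l1' R1 T1.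
  - apply ReachAt_leaf; rewrite !app_nil_r; [constructor; auto|].
    apply rq_app with l1; auto using requiv_refl, Permutation_refl.
  - apply (ReachAt_ctx (Taylor N') _ (fun x => rapp s (l1 ++ x :: ss)) y);
      auto using linear_ctx_bag.
    + intros x Tx. rewrite app_cons_snoc.
      apply bag_Reach; [auto|apply Forall_app; auto|].
      clear - H. induction H as [|? ? ? ? [_ R]]; constructor; eauto using ReachAt_Reach.
    + intros x Tx Rx.
      rewrite (app_cons_snoc l1), (app_cons_snoc l1').
      apply IH; [apply Forall2_app; auto|apply Forall_app; auto].
Qed.

Lemma simulates_appr M N N' : simulates N N' -> simulates (Defs.app M N) (Defs.app M N').
Proof.
  intros [S C]. split.
  - intros s HT. inversion HT as [| |s0 b ? ? Ts0 Tb]; subst.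
    apply (bag_Reach s0 M N' Ts0 b []); auto.
    revert Tb. apply Forall_impl. exact S.
  - intros t HT. inversion HT as [| |t0 b ? ? Tt0 Tb]; subst.
    assert (exists ss, Forall2 (fun s y => taylor s N /\ ReachAt (Taylor N') y s) ss b)
      as [ss Hss].
    { clear - Tb C. induction Tb as [|y b Ty Tb [ss Hss]]; [exists []; constructor|].
      destruct (C _ Ty) as [s [Ts R]]. exists (s :: ss). constructor; auto. }
    exists (rapp t0 ss). split.
    + constructor; auto. clear - Hss. induction Hss; constructor; tauto.
    + apply (bag_ReachAt t0 M N N' Tt0 ss b Hss [] []); auto.
Qed.

Lemma simulates_beta_step M N : beta_step M N -> simulates M N.
Proof.
  induction 1; auto using simulates_root, simulates_lam, simulates_appl, simulates_appr.
Qed.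

Lemma simulates_beta_star M N : beta_star M N -> simulates M N.
Proof.
  induction 1 as [M N [_ [_ [HB|HS]]]| |M P N _ IH1 _ IH2].
  - apply simulates_bisim; auto.
  - apply simulates_beta_step; auto.
  - apply simulates_refl.
  - eapply simulates_trans; eauto.
Qed.

(* Index the reduction by the pairs (approximant of [M], reduct of it made of
   approximants of [N]): the sources cover T(M) by the first half of the
   simulation, the targets cover T(N) by the second half. *)
Lemma rstar_inf_of_simulates M N : simulates M N -> rstar_inf (Taylor M) (Taylor N).
Proof.
  intros [Sd Cp].
  set (I := {p : rterm * rsum | taylor (fst p) M /\ rstar [fst p] (snd p) /\
                                forall y, In y (snd p) -> taylor y N}).
  exists I, (fun i => fst (proj1_sig i)), (fun i => snd (proj1_sig i)).
  split; [|split].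
  - intros u. split.
    + intros Tu. destruct (reduce_to_g (Taylor N) u (Taylor_requiv_closed N) (Sd u Tu))
        as [C' [R G]].
      exists (exist _ (u, C') (conj Tu (conj R G))). apply requiv_refl.
    + intros [[[s C] [Ts HC]] R]. simpl in *. eapply taylor_requiv; eauto using requiv_sym.
  - intros u. split.
    + intros Tu. destruct (Cp u Tu) as [s [Ts Rm]].
      destruct (reduce_to_g_at (Taylor N) s u (Taylor_requiv_closed N) Rm Tu)
        as [C' [R [G Mm]]].
      exists (exist _ (s, C') (conj Ts (conj R G))). exact Mm.
    + intros [[[s C] [Ts [HC G]]] [v [Hv R]]]. simpl in *.
      eapply taylor_requiv; eauto using requiv_sym.
  - intros [[s C] [Ts [R G]]]. exact R.
Qed.

Theorem mainTheorem5 (M N : term) :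
  is001 M -> is001 N -> beta_star M N -> rstar_inf (Taylor M) (Taylor N).
Proof.
  intros _ _ Hred. apply rstar_inf_of_simulates, simulates_beta_star, Hred.
Qed.
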